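(* Let $p\geq 1$ be an integer, $\alpha>0$, and let $\lambda\in\mathbb{C}$, $\lambda\neq 0$. Consider an explicit time-marching scheme whose stability region contains the real segment $[-C,0]$, where $C>0$ is the largest value such that the scheme applied to $dy/dt=\mu y$ with real $\mu<0$ is stable whenever $|\mu\Delta t|\leq C$. If $\alpha\geq\alpha_{\min}=(2^p-1)/C$, then the explicit time integration of $dy/dt=T^{(p)}_{\lambda}(\alpha,\Delta t)\,\lambda\, y$ with this scheme remains stable in the limit of very large time steps: the modified dimensionless eigenvalue satisfies $$\left(T^{(p)}_\lambda(\alpha,\Delta t)\lambda\right)\Delta t=-\frac{2^p-1}{\alpha}+\mathcal{O}(\Delta t^{-1})\quad(\Delta t\to\infty),$$ so that in this limit $-C\leq \left(T^{(p)}_\lambda(\alpha,\Delta t)\lambda\right)\Delta t<0$ lies on the negative real axis within the stability region of the scheme.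
   Context: For $\Delta t>0$, $\alpha>0$ and $\lambda\in\mathbb{C}$ (whenever the inverses exist), the TASE operator of order $p$ is defined recursively by $T^{(1)}_\lambda(\alpha,\Delta t)=(1-\alpha\Delta t\lambda)^{-1}$ and, for $p\geq 2$, $$T^{(p)}_\lambda(\alpha,\Delta t)=\frac{2^{p-1}T^{(p-1)}_\lambda(\alpha/2,\Delta t)-T^{(p-1)}_\lambda(\alpha,\Delta t)}{2^{p-1}-1}.$$ Equivalently $T^{(p)}_\lambda(\alpha,\Delta t)=\sum_{k=0}^{p-1}\beta_{p,k}(2^k-\alpha\Delta t\lambda)^{-1}$ for suitable rational constants $\beta_{p,k}$. The stability region of an explicit scheme is the set of $z=\mu\Delta t\in\mathbb{C}$ for which the scheme applied to $dy/dt=\mu y$ has amplification factor of modulus at most $1$. *)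

From HB Require Import structures.
From mathcomp Require Import all_boot all_order all_algebra.
From mathcomp Require Import complex.
Set Implicit Arguments. Unset Strict Implicit. Unset Printing Implicit Defensive.
Import Order.TTheory GRing.Theory Num.Theory.
Local Open Scope ring_scope.
Local Open Scope complex_scope.

(* tase_aux n a dt l = T^{(n+1)}_l(a, dt). Base case T^{(1)} = (1 - a dt l)^{-1};
   recursion T^{(p)}(a) = (2^{p-1} T^{(p-1)}(a/2) - T^{(p-1)}(a)) / (2^{p-1} - 1).
   (mathcomp's ^-1 of 0 is 0; the theorem asserts the relevant inverses exist.) *)
Fixpoint tase_aux (R : rcfType) (n : nat) (a dt : R) (l : R[i]) : R[i] :=
  match n with
  | 0 => (1 - (a * dt)%:C * l)^-1
  | n'.+1 => ((2 ^ n'.+1)%:R * tase_aux n' (a / 2) dt l - tase_aux n' a dt l)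
             / ((2 ^ n'.+1)%:R - 1)
  end.

Definition TASE (R : rcfType) (p : nat) (a dt : R) (l : R[i]) : R[i] :=
  tase_aux p.-1 a dt l.

(* Stability region of an explicit scheme given by its amplification factor
   z = mu*dt |-> Amp z for dy/dt = mu y. *)
Definition stability_region (R : rcfType) (Amp : R[i] -> R[i]) (z : R[i]) : Prop :=
  `|Amp z| <= 1.

From HB Require Import structures.
From mathcomp Require Import all_boot all_order all_algebra.
From mathcomp Require Import complex.
From mathcomp Require Import ring lra.
Set Implicit Arguments. Unset Strict Implicit. Unset Printing Implicit Defensive.
Import Order.TTheory GRing.Theory Num.Theory.
Local Open Scope ring_scope.
Local Open Scope complex_scope.

(* Since [T^(1)_l(a, dt) l dt = -1/a + 1/(a (1 - a dt l))] and
   [|1 - a dt l| >= a |l| dt - 1], the first-order operator times [l dt] is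
   [-1/a + O(1/dt)].  The limits [-(2^p - 1)/a] satisfy the same Richardson
   recursion as [T^(p)], so by linearity the [O(1/dt)] error survives every
   extrapolation step.  Finally [-(2^p - 1)/alpha] lies in [[-C, 0)] exactly
   when [alpha >= (2^p - 1)/C]. *)

Local Notation normc := ComplexField.Normc.normc.

Lemma natr_exp2S_sub1_neq0 (R : numDomainType) (p : nat) :
  (2 ^ p.+1)%:R - 1 != 0 :> R.
Proof. by rewrite subr_eq0 pnatr_eq1 -[1%N](expn0 2) eqn_exp2l. Qed.

Section Eventually.
Variable R : realDomainType.

Definition eventually (P : R -> Prop) : Prop :=
  exists M : R, forall x, M <= x -> P x.

Lemma eventually_and (P Q : R -> Prop) :
  eventually P -> eventually Q -> eventually (fun x => P x /\ Q x).
Proof.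
move=> [M1 HP] [M2 HQ]; exists (Num.max M1 M2) => x.
by rewrite ge_max => /andP[/HP hP /HQ hQ].
Qed.

Lemma eventually_forall_ltn (P : nat -> R -> Prop) (n : nat) :
  (forall j, eventually (P j)) ->
  eventually (fun x => forall j, (j < n)%N -> P j x).
Proof.
move=> HP; elim: n => [|n [M HM]]; first by exists 0.
have [M' HM'] := HP n; exists (Num.max M M') => x.
rewrite ge_max => /andP[/HM hM /HM' hM'] j.
by rewrite ltnS leq_eqVlt => /orP[/eqP-> | /hM].
Qed.

Lemma eventually_pos (P : R -> Prop) :
  eventually P -> exists M : R, 0 < M /\ forall x, M <= x -> P x.
Proof.
move=> [M HM]; exists (Num.max M 1); split; first by rewrite lt_max ltr01 orbT.
by move=> x; rewrite ge_max => /andP[/HM].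
Qed.

End Eventually.

Section BigOInv.
Variable R : rcfType.
Implicit Types (f g : R -> R[i]) (c l : R[i]).

Definition bigO_inv f : Prop :=
  exists K : R, eventually (fun x => `|f x| <= (K / x)%:C).

Lemma bigO_inv_eventually_eq f g :
  eventually (fun x => f x = g x) -> bigO_inv g -> bigO_inv f.
Proof.
move=> Efg [K HK]; exists K.
by have [M HM] := eventually_and Efg HK; exists M => x /HM[->].
Qed.

Lemma bigO_invD f g : bigO_inv f -> bigO_inv g -> bigO_inv (fun x => f x + g x).
Proof.
move=> [Kf Hf] [Kg Hg]; exists (Kf + Kg).
have [M HM] := eventually_and Hf Hg; exists M => x /HM[hf hg].
rewrite mulrDl rmorphD; exact: le_trans (ler_normD _ _) (lerD hf hg).
Qed.

Lemma bigO_invZ c f : bigO_inv f -> bigO_inv (fun x => c * f x).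
Proof.
move=> [K [M HM]]; exists (normc c * K); exists M => x /HM hf.
rewrite normrM -mulrA rmorphM; exact: ler_wpM2l hf.
Qed.

(* [|1 - c| >= |c| - 1 >= r/2] once [|c| >= r >= 2]. *)
Lemma norm_inv_1_sub_le c (r : R) :
  2 <= r -> r%:C <= `|c| -> 1 - c != 0 /\ `|(1 - c)^-1| <= (2 / r)%:C.
Proof.
move=> r2 rc; set m := normc (1 - c).
have rm : r - 1 <= m.
  have := lerB_dist c 1; rewrite normr1 distrC -[`|1 - c|]/(m%:C) => hm.
  by rewrite -lecR rmorphB; apply: le_trans hm; rewrite lerD2r.
have m0 : 0 < m by lra.
have nz : 1 - c != 0 by rewrite -normr_gt0 -[`|_|]/(m%:C) ltcR.
split=> //; rewrite normfV -[`|_|]/(m%:C) -fmorphV lecR -[2 / r]invf_div.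
by rewrite lef_pV2 ?posrE ?divr_gt0 //; lra.
Qed.

Lemma eventually_resolvent_le (a : R) l : 0 < a -> l != 0 ->
  eventually (fun dt => 1 - (a * dt)%:C * l != 0 /\
    `|(1 - (a * dt)%:C * l)^-1| <= (2 / (a * normc l) / dt)%:C).
Proof.
move=> a0 l0; have n0 : 0 < normc l by rewrite -ltcR -[(normc l)%:C]/`|l| normr_gt0.
have an0 : 0 < a * normc l by rewrite mulr_gt0.
exists (2 / (a * normc l)) => dt hdt.
have dt0 : 0 < dt by apply: lt_le_trans hdt; rewrite divr_gt0.
have r2 : 2 <= a * normc l * dt by rewrite mulrC -ler_pdivrMr.
have rz : (a * normc l * dt)%:C <= `|(a * dt)%:C * l|.
  rewrite normrM ger0_norm ?ler0c ?mulr_ge0 ?(ltW a0) ?(ltW dt0) //.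
  by rewrite -[`|l|]/((normc l)%:C) -rmorphM mulrAC.
have [nz hinv] := norm_inv_1_sub_le r2 rz; split=> //.
suff <- : 2 / (a * normc l * dt) = 2 / (a * normc l) / dt by [].
by field; rewrite !gt_eqF.
Qed.

End BigOInv.

Section TASELimit.
Variable R : rcfType.

Definition tase_limit (p : nat) (a : R) : R := - (2 ^ p - 1)%:R / a.

Lemma tase_limit_rec (p : nat) (a : R) : a != 0 ->
  tase_limit p.+2 a =
  ((2 ^ p.+1)%:R * tase_limit p.+1 (a / 2) - tase_limit p.+1 a) / ((2 ^ p.+1)%:R - 1).
Proof.
move=> a0; rewrite /tase_limit !natrB ?expn_gt0 // [(2 ^ p.+2)%N]expnS natrM.
by field; rewrite natr_exp2S_sub1_neq0 a0.
Qed.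

Lemma tase_aux_sub_limit (k : nat) (a : R) (l : R[i]) : 0 < a -> l != 0 ->
  bigO_inv (fun dt => tase_aux k a dt l * l * dt%:C - (tase_limit k.+1 a)%:C).
Proof.
move=> + l0; elim: k a => [|k IH] a a0.
  have [M HM] := eventually_resolvent_le a0 l0.
  apply: (bigO_inv_eventually_eq (g := fun dt => a%:C^-1 * (1 - (a * dt)%:C * l)^-1)).
    exists M => dt /HM[+ _]; rewrite /= rmorphM => nz.
    rewrite /tase_limit expn1 subn1 mulNr div1r rmorphN fmorphV.
    by field; rewrite nz fmorph_eq0 gt_eqF.
  apply: (@bigO_invZ _ a%:C^-1 (fun dt => (1 - (a * dt)%:C * l)^-1)).
  by exists (2 / (a * normc l)), M => dt /HM[_].
set P : R[i] := (2 ^ k.+1)%:R.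
have P1 : P - 1 != 0 by apply: natr_exp2S_sub1_neq0.
apply: (bigO_inv_eventually_eq (g := fun dt =>
   P / (P - 1) * (tase_aux k (a / 2) dt l * l * dt%:C - (tase_limit k.+1 (a / 2))%:C)
   + - (P - 1)^-1 * (tase_aux k a dt l * l * dt%:C - (tase_limit k.+1 a)%:C))).
  exists 0 => dt _; rewrite /= tase_limit_rec ?gt_eqF //.
  set L1 := tase_limit _ (a / 2); set L2 := tase_limit _ a.
  rewrite !(rmorphM, rmorphB, fmorphV, rmorph_nat, rmorph1) -/P.
  by field; rewrite fmorph_eq0 gt_eqF // natr_exp2S_sub1_neq0.
have a20 : 0 < a / 2 by rewrite divr_gt0.
exact: (bigO_invD (bigO_invZ _ (IH _ a20)) (bigO_invZ _ (IH _ a0))).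
Qed.

Lemma tase_limit_in_segment (p : nat) (a C : R) : (0 < p)%N -> 0 < C ->
  (2 ^ p - 1)%:R / C <= a -> -C <= tase_limit p a /\ tase_limit p a < 0.
Proof.
move=> p0 C0 Ha; have c0 : 0 < (2 ^ p - 1)%:R :> R.
  by rewrite ltr0n subn_gt0 -[1%N](expn0 2) ltn_exp2l.
have a0 : 0 < a by apply: lt_le_trans Ha; rewrite divr_gt0.
rewrite /tase_limit mulNr oppr_lt0 divr_gt0 // lerN2 ler_pdivrMr //.
by rewrite mulrC -ler_pdivrMr.
Qed.

End TASELimit.

Theorem theorem1 (R : rcfType) (p : nat) (alpha C : R) (lam : R[i])
    (Amp : R[i] -> R[i]) :
  (1 <= p)%N -> 0 < alpha -> lam != 0 -> 0 < C ->
  (* the scheme's stability region contains the real segment [-C, 0] *)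
  (forall x : R, -C <= x <= 0 -> stability_region Amp x%:C) ->
  (* C is the largest such value *)
  (forall C' : R, C < C' -> exists x : R, -C' <= x <= 0 /\ ~ stability_region Amp x%:C) ->
  (2 ^ p - 1)%:R / C <= alpha ->
  let L : R := - (2 ^ p - 1)%:R / alpha in
  (* (T lam) dt = L + O(dt^-1) as dt -> oo, with all inverses defined *)
  (exists K M : R, 0 < M /\
     forall dt : R, M <= dt ->
       (forall j : nat, (j < p)%N -> 1 - ((alpha / (2 ^ j)%:R) * dt)%:C * lam != 0) /\
       `|TASE p alpha dt lam * lam * dt%:C - L%:C| <= (K / dt)%:C) /\
  (* the limit lies on the negative real axis inside the stability region *)
  (-C <= L /\ L < 0 /\ stability_region Amp L%:C).
Proof.
case: p => [//|q] _ a0 l0 C0 Hst _ Ha L.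
have [LC L0] := tase_limit_in_segment (ltn0Sn q) C0 Ha.
split; last by split=> //; split=> //; apply: Hst; rewrite LC ltW.
have nz j : eventually (fun dt => 1 - (alpha / (2 ^ j)%:R * dt)%:C * lam != 0).
  have aj : 0 < alpha / (2 ^ j)%:R by rewrite divr_gt0 // ltr0n expn_gt0.
  by have [M HM] := eventually_resolvent_le aj l0; exists M => dt /HM[].
have [K HK] := tase_aux_sub_limit q a0 l0.
have [M [M0 HM]] :=
  eventually_pos (eventually_and (eventually_forall_ltn q.+1 nz) HK).
have -> : L = tase_limit q.+1 alpha by [].
by exists K, M.
Qed.
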